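(* Let $t_0<\beta\le+\infty$, $J=[t_0,\beta[$, let $D\subset\mathbb{R}^n$ be an open set, let $m\ge 1$, and let $f\colon J\times D^m\to\mathbb{R}^n$ be continuous. Suppose there is a continuous function $k\colon J\to\mathbb{R}$ such that \[ \|F(t,z)-F(t,z')\|\le k(t)\,\|z-z'\|\qquad (t\in J,\ z,z'\in D^m), \] where $F(t,(z_1,\dots,z_m))=f(t,z_1,\dots,z_m)$. Let $g_1,\dots,g_m\colon J\to\mathbb{R}$ be continuous functions such that, for some real number $\gamma\le t_0$, $\gamma\le g_j(t)\le t$ for all $t\in J$ and all $j=1,\dots,m$. Let $\theta\colon[\gamma,t_0]\to D$ be a continuous initial function. Then for every $\beta_1$ with $t_0<\beta_1\le\beta$, the problem \[ x'(t)=f\big(t,x(g_1(t)),\dots,x(g_m(t))\big)\quad (t\in[t_0,\beta_1[),\qquad x(t)=\theta(t)\quad(t\in[\gamma,t_0]) \] has at most one solution on $[\gamma,\beta_1[$.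
   Context: A solution of the problem on $[\gamma,\beta_1[$ is a continuous function $x\colon[\gamma,\beta_1[\to D$ that is differentiable on $[t_0,\beta_1[$ (one-sided at $t_0$), satisfies $x'(t)=f(t,x(g_1(t)),\dots,x(g_m(t)))$ for all $t\in[t_0,\beta_1[$, and satisfies $x(t)=\theta(t)$ for all $t\in[\gamma,t_0]$. The norm $\|\cdot\|$ on $\mathbb{R}^n$ is a fixed norm, and on $D^m\subset(\mathbb{R}^n)^m$ the norm is $\|(z_1,\dots,z_m)\|=\max_{1\le j\le m}\|z_j\|$. *)

From HB Require Import structures.
From mathcomp Require Import all_boot all_order all_algebra.
From mathcomp Require Import all_classical all_reals all_analysis.
Set Implicit Arguments. Unset Strict Implicit. Unset Printing Implicit Defensive.
Import Order.TTheory GRing.Theory Num.Theory.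
Import numFieldNormedType.Exports.
Local Open Scope classical_set_scope.
Local Open Scope ring_scope.

Definition is_norm (R : realType) (n : nat) (N : 'rV[R]_n -> R) : Prop :=
  [/\ forall x y, N (x + y) <= N x + N y,
      forall (a : R) x, N (a *: x) = `|a| * N x
    & forall x, N x = 0 -> x = 0].

(* The norm on (R^n)^m, points z = (z_1,...,z_m) stored as the rows of an
   m x n matrix: ||z|| = max_j ||z_j||. *)
Definition maxnorm (R : realType) (m n : nat) (N : 'rV[R]_n -> R)
  (z : 'M[R]_(m, n)) : R := \big[Num.max/0]_(j < m) N (row j z).

Definition delay_args (R : realType) (m n : nat) (g : 'I_m -> R -> R)
  (x : R -> 'rV[R]_n) (t : R) : 'M[R]_(m, n) :=
  \matrix_(j < m) x (g j t).

Definition is_solution (R : realType) (n m : nat) (D : set 'rV[R]_n)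
  (f : R -> 'M[R]_(m, n) -> 'rV[R]_n) (g : 'I_m -> R -> R)
  (theta : R -> 'rV[R]_n) (gamma t0 : R) (beta1 : \bar R)
  (x : R -> 'rV[R]_n) : Prop :=
  [/\ {within [set t | gamma <= t /\ (t%:E < beta1)%E], continuous x},
      (forall t, gamma <= t -> (t%:E < beta1)%E -> D (x t)),
      (forall t, t0 < t -> (t%:E < beta1)%E ->
         (fun h : R => h^-1 *: (x (t + h) - x t)) @ 0^' -->
           f t (delay_args g x t)),
      ((fun h : R => h^-1 *: (x (t0 + h) - x t0)) @ 0^'+ -->
           f t0 (delay_args g x t0))
    & (forall t, gamma <= t <= t0 -> x t = theta t)].

(* Let w = x - y for two solutions x, y; w vanishes on [gamma, t0].  If w
   vanishes on [gamma, s] and K bounds the Lipschitz rate k, then on [s, u]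
   with K (u - s) <= 1/2 the delayed arguments g_j(r) stay in [gamma, u], so the
   right derivative of w is bounded by K * max_[s,u] ||w||, and the mean value
   inequality gives max_[s,u] ||w|| <= K (u - s) max_[s,u] ||w||, forcing w = 0
   on [s, u].  Real induction on [t0, t], closed by continuity of w, carries
   w = 0 up to every t < beta1.  The mean value inequality for one-sided
   derivatives is itself proved by real induction. *)

From HB Require Import structures.
From mathcomp Require Import all_boot all_order all_algebra.
From mathcomp Require Import all_classical all_reals all_analysis.
From mathcomp Require Import lra.
Import Order.TTheory GRing.Theory Num.Theory.
Import numFieldNormedType.Exports.
Local Open Scope classical_set_scope.
Local Open Scope ring_scope.

Section IsNorm.
Context {R : realType} {n : nat} {N : 'rV[R]_n -> R}.
Hypothesis normN : is_norm N.

Lemma is_norm_lerD x y : N (x + y) <= N x + N y.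
Proof. by case: normN => lerN _ _; apply: lerN. Qed.

Lemma is_normZ a x : N (a *: x) = `|a| * N x.
Proof. by case: normN => _ NZ _; apply: NZ. Qed.

Lemma is_norm_eq0 x : N x = 0 -> x = 0.
Proof. by case: normN => _ _ N0; apply: N0. Qed.

Lemma is_norm0 : N 0 = 0.
Proof. by rewrite -(scale0r 0) is_normZ normr0 mul0r. Qed.

Lemma is_normN x : N (- x) = N x.
Proof. by rewrite -scaleN1r is_normZ normrN normr1 mul1r. Qed.

Lemma is_norm_ge0 x : 0 <= N x.
Proof. by have := is_norm_lerD x (- x); rewrite subrr is_norm0 is_normN; lra. Qed.

Lemma is_norm_subr_le0 x y : N (x - y) <= 0 -> x = y.
Proof.
move=> le0; apply/eqP; rewrite -subr_eq0; apply/eqP/is_norm_eq0/le_anti.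
by rewrite le0 is_norm_ge0.
Qed.

Lemma is_norm_ler_distD x y z : N (x - z) <= N (x - y) + N (y - z).
Proof. by have := is_norm_lerD (x - y) (y - z); rewrite addrA subrK. Qed.

Lemma is_norm_ler_dist_dist x y : `|N x - N y| <= N (x - y).
Proof.
have := is_norm_ler_distD x y 0; have := is_norm_ler_distD y x 0.
rewrite !subr0 -opprB is_normN => hyx hxy.
by rewrite ler_norml; apply/andP; split; lra.
Qed.

Lemma is_norm_ler_sum (I : finType) (F : I -> 'rV[R]_n) :
  N (\sum_i F i) <= \sum_i N (F i).
Proof.
apply: (big_ind2 (fun u a => N u <= a)) => // [|u a v b ua vb].
  by rewrite is_norm0.
by apply: le_trans (is_norm_lerD u v) _; apply: lerD.
Qed.

Lemma is_norm_le_mx_norm : exists2 c, 0 < c & forall v, N v <= c * `|v|.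
Proof.
exists (1 + \sum_(j < n) N (delta_mx 0 j)).
  by rewrite ltr_wpDr // sumr_ge0 // => j _; apply: is_norm_ge0.
move=> v; rewrite {1}(row_sum_delta v); apply: le_trans (is_norm_ler_sum _ _) _.
rewrite mulrDl mul1r mulr_suml ler_wpDl // ler_sum // => j _.
rewrite is_normZ mulrC ler_wpM2l ?is_norm_ge0 //.
rewrite -[`|v|]/(mx_norm v) mx_normrE.
exact: (le_bigmax _ (fun ij : 'I_1 * 'I_n => `|v ij.1 ij.2|) (0, j)).
Qed.

Lemma is_norm_cvg_near {T : Type} {F : set_system T} {FF : Filter F}
    {f : T -> 'rV[R]_n} {l : 'rV[R]_n} :
  f @ F --> l -> forall e, 0 < e -> \forall t \near F, N (f t - l) < e.
Proof.
have [c c0 le_Nc] := is_norm_le_mx_norm.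
move=> fl e e0; have ec0 : 0 < e / c by apply: divr_gt0.
apply: filterS (cvgr_dist_lt _ _ fl _ ec0) => t lt_ec.
by apply: le_lt_trans (le_Nc _) _; rewrite -ltr_pdivlMl // mulrC distrC.
Qed.

Lemma is_norm_continuous : continuous N.
Proof.
move=> v; apply/(cvgrPdist_lt (FF := nbhs_filter v)) => e e0.
apply: filterS (is_norm_cvg_near (FF := nbhs_filter v) cvg_id e e0) => u lt_e.
by rewrite distrC; apply: le_lt_trans (is_norm_ler_dist_dist u v) lt_e.
Qed.

Lemma is_norm_continuousB (c : 'rV[R]_n) : continuous (fun z : 'rV[R]_n => N (z - c)).
Proof.
by move=> z; exact: (continuous_comp (cvgB cvg_id (cvg_cst c)) (is_norm_continuous _)).
Qed.

End IsNorm.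

Lemma continuous_within_le_left {R : realType} {phi : R -> R} {a s e : R} :
  a < s -> {within `[a, s], continuous phi} ->
  (forall u, a <= u < s -> phi u <= e) -> phi s <= e.
Proof.
move=> a_s /(continuous_within_itvP _ a_s) [_ _ phi_s] le_e.
rewrite -(cvg_lim _ phi_s) //; apply: limr_le; first by apply/cvg_ex; exists (phi s).
near=> u; apply: le_e; apply/andP; split.
  by apply: ltW; near: u; exact: nbhs_left_gt.
by near: u; exact: nbhs_left_lt.
Unshelve. all: by end_near.
Qed.

Lemma real_induction {R : realType} (a b : R) (P : R -> Prop) :
  P a ->
  (forall s, a <= s < b -> (forall u, a <= u <= s -> P u) ->
     exists2 d, 0 < d & forall u, s < u < s + d -> P u) ->
  (forall s, a < s <= b -> (forall u, a <= u < s -> P u) -> P s) ->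
  forall u, a <= u <= b -> P u.
Proof.
move=> Pa forward closure u /andP[a_u u_b].
pose A := [set t | t <= b /\ forall v, a <= v <= t -> P v].
have Aa : A a.
  split=> [|v /andP[a_v v_a]]; first exact: le_trans u_b.
  by have -> : v = a by apply/le_anti; rewrite v_a a_v.
have supA : has_sup A by split; [exists a | exists b => t []].
set s := sup A.
have a_s : a <= s := sup_upper_bound supA Aa.
have s_b : s <= b by apply: ge_sup => [|t []]; first by exists a.
have P_below_s v : a <= v < s -> P v.
  move=> /andP[a_v v_s]; have sv0 : 0 < s - v by rewrite subr_gt0.
  have [t [_ Pt] t_v] := sup_adherent sv0 supA.
  by apply: Pt; rewrite a_v /=; rewrite -/s in t_v; lra.
have P_upto_s v : a <= v <= s -> P v.
  move=> /andP[a_v v_s]; have [v_lt_s|s_le_v] := ltP v s.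
    by apply: P_below_s; rewrite a_v.
  have -> : v = s by apply/le_anti; rewrite v_s s_le_v.
  have [a_lt_s|s_le_a] := ltP a s; first by apply: closure; rewrite ?a_lt_s.
  by have -> : s = a by apply/le_anti; rewrite s_le_a a_s.
have s_eq_b : s = b.
  apply/eqP; rewrite eq_le s_b /= leNgt; apply/negP => s_lt_b.
  have s_in : a <= s < b by rewrite a_s s_lt_b.
  have [d d0 Pd] := forward s s_in P_upto_s.
  pose v := Num.min (s + d / 2) b.
  have v_b : v <= b by rewrite ge_min lexx orbT.
  have v_d : v <= s + d / 2 by rewrite ge_min lexx.
  have s_v : s < v by rewrite lt_min s_lt_b andbT; lra.
  have : A v.
    split=> // w /andP[a_w w_v]; have [w_s|s_w] := leP w s.
      by apply: P_upto_s; rewrite a_w.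
    by apply: Pd; rewrite s_w /=; lra.
  by move/(sup_upper_bound supA); rewrite -/s; lra.
by apply: P_upto_s; rewrite a_u s_eq_b.
Qed.

Lemma near_at_right_ex {R : realType} {p : R} {P : R -> Prop} :
  (\forall x \near p^'+, P x) -> exists2 d, 0 < d & forall x, p < x < p + d -> P x.
Proof.
move/nbhs_ballP => [d /= d0 Pd]; exists d => // x /andP[p_x x_pd].
apply: Pd => //; rewrite -ball_normE /ball_ /= ltr0_norm ?subr_lt0 //; lra.
Qed.

Definition diffq {R : realType} {V : lmodType R} (w : R -> V) (r h : R) : V :=
  h^-1 *: (w (r + h) - w r).

Lemma diffqB {R : realType} {V : lmodType R} (w1 w2 : R -> V) r :
  diffq (w1 \- w2) r = diffq w1 r \- diffq w2 r.
Proof.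
apply/funext => h; rewrite /diffq /= -scalerBr; congr (_ *: _).
by rewrite !opprB addrACA [RHS]addrACA [- w2 (r + h) + _]addrC.
Qed.

Section MeanValue.
Context {R : realType} {n : nat} {N : 'rV[R]_n -> R}.
Hypothesis normN : is_norm N.

Lemma is_norm_increment_le {w : R -> 'rV[R]_n} {s u : R} {L : 'rV[R]_n} {c : R} :
  s < u -> N (diffq w s (u - s) - L) <= c -> N (w u - w s) <= (u - s) * (N L + c).
Proof.
move=> s_u le_c; have us0 : 0 < u - s by rewrite subr_gt0.
have -> : w u - w s = (u - s) *: diffq w s (u - s).
  by rewrite /diffq scalerA mulfV ?gt_eqF // scale1r addrCA subrr addr0.
rewrite is_normZ // gtr0_norm // ler_pM2l //.
by have := is_norm_ler_distD normN (diffq w s (u - s)) L 0; rewrite !subr0; lra.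
Qed.

Lemma is_norm_mean_value_le_eps {w : R -> 'rV[R]_n} {a b C e : R} :
  a <= b -> {within `[a, b], continuous w} ->
  (forall r, a <= r < b -> exists2 L, diffq w r @ 0^'+ --> L & N L <= C) ->
  0 < e -> N (w b - w a) <= (C + e) * (b - a) + e.
Proof.
move=> a_b wc deriv e0.
pose phi u := N (w u - w a) - (C + e) * (u - a).
suff phi_le : forall u, a <= u <= b -> phi u <= e.
  by have := phi_le b; rewrite a_b lexx /phi => /(_ isT); lra.
have phic : {within `[a, b], continuous phi}.
  have lin_c : continuous (fun u : R => (C + e) * (u - a)).
    by move=> v; apply: cvgM; [exact: cvg_cst | apply: cvgB; [exact: cvg_id | exact: cvg_cst]].
  have Nwc : {within `[a, b], continuous (fun v => N (w v - w a))}.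
    apply: (within_continuous_comp _ w (fun z => N (z - w a))) wc => z _.
    exact: is_norm_continuousB.
  by move=> v; apply: cvgB; [exact: Nwc | exact: continuous_subspaceT lin_c v].
apply: real_induction => [|s /andP[a_s s_b] phi_s|s /andP[a_s s_b] phi_below].
- by rewrite /phi !subrr is_norm0 // mulr0 subr0 ltW.
- have [L dL NL] : exists2 L, diffq w s @ 0^'+ --> L & N L <= C.
    by apply: deriv; rewrite a_s s_b.
  have [d d0 near_L] := near_at_right_ex (is_norm_cvg_near normN dL e e0).
  exists d => // u /andP[s_u u_sd].
  have us_d : 0 < u - s < 0 + d by apply/andP; split; lra.
  have incr := is_norm_increment_le s_u (ltW (near_L (u - s) us_d)).
  have := is_norm_ler_distD normN (w u) (w s) (w a).
  have := phi_s s; rewrite a_s lexx /phi => /(_ isT).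
  have : (u - s) * N L <= (u - s) * C by rewrite ler_wpM2l // subr_ge0 ltW.
  by rewrite /phi; lra.
- apply: (continuous_within_le_left a_s); last by move=> v v_s; apply: phi_below.
  apply: continuous_subspaceW phic => v /=; rewrite !in_itv /= => /andP[a_v v_s].
  by rewrite a_v (le_trans v_s s_b).
Qed.

Lemma is_norm_mean_value_le {w : R -> 'rV[R]_n} {a b C : R} :
  a <= b -> {within `[a, b], continuous w} ->
  (forall r, a <= r < b -> exists2 L, diffq w r @ 0^'+ --> L & N L <= C) ->
  N (w b - w a) <= C * (b - a).
Proof.
move=> a_b wc deriv; apply/ler_addgt0Pr => e e0.
have ba1 : 0 < b - a + 1 by lra.
apply: le_trans (is_norm_mean_value_le_eps a_b wc deriv (divr_gt0 e0 ba1)) _.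
by rewrite mulrDl -addrA -{2}(mulr1 (e / _)) -mulrDr divfK ?gt_eqF.
Qed.

End MeanValue.

Lemma maxnorm_ge0 {R : realType} {m n : nat} (N : 'rV[R]_n -> R) (z : 'M[R]_(m, n)) :
  0 <= maxnorm N z.
Proof. exact: bigmax_ge_id. Qed.

Lemma maxnorm_le {R : realType} {m n : nat} (N : 'rV[R]_n -> R) (z : 'M[R]_(m, n)) M :
  0 <= M -> (forall j, N (row j z) <= M) -> maxnorm N z <= M.
Proof. by move=> M0 le_M; apply: bigmax_le. Qed.

Section DelayUniqueness.
Context {R : realType} {n m : nat} {N : 'rV[R]_n -> R} {D : set 'rV[R]_n}
  {f : R -> 'M[R]_(m, n) -> 'rV[R]_n} {k : R -> R} {g : 'I_m -> R -> R}
  {theta : R -> 'rV[R]_n} {gamma t0 : R} {beta1 : \bar R}.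
Hypothesis g_delay : forall j t, t0 <= t -> (t%:E < beta1)%E -> gamma <= g j t <= t.

Lemma solution_diffq_right {x : R -> 'rV[R]_n} {r : R} :
  is_solution D f g theta gamma t0 beta1 x ->
  t0 <= r -> (r%:E < beta1)%E -> diffq x r @ 0^'+ --> f r (delay_args g x r).
Proof.
case=> _ _ dx dx0 _; rewrite le_eqVlt => /predU1P[<- //|t0_r r_b].
exact: cvg_dnbhs_at_right (dx r t0_r r_b).
Qed.

Lemma solution_delay_args_in_D {x : R -> 'rV[R]_n} {r : R} :
  is_solution D f g theta gamma t0 beta1 x ->
  t0 <= r -> (r%:E < beta1)%E -> forall j, D (row j (delay_args g x r)).
Proof.
case=> _ xD _ _ _ t0_r r_b j; rewrite rowK.
have /andP[g_ge g_le] := g_delay j r t0_r r_b.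
by apply: xD => //; apply: le_lt_trans r_b; rewrite lee_fin.
Qed.

Hypothesis normN : is_norm N.
Hypothesis f_lipschitz : forall t (z z' : 'M[R]_(m, n)), t0 <= t -> (t%:E < beta1)%E ->
  (forall j, D (row j z)) -> (forall j, D (row j z')) ->
  N (f t z - f t z') <= k t * maxnorm N (z - z').

Context {x y : R -> 'rV[R]_n}.
Hypotheses (solx : is_solution D f g theta gamma t0 beta1 x)
  (soly : is_solution D f g theta gamma t0 beta1 y).

Lemma solutions_diffq_bound r K M : t0 <= r -> (r%:E < beta1)%E ->
  k r <= K -> 0 <= K -> 0 <= M ->
  (forall u, gamma <= u <= r -> N (x u - y u) <= M) ->
  exists2 L, diffq (x \- y) r @ 0^'+ --> L & N L <= K * M.
Proof.
move=> t0_r r_b kK K0 M0 le_M.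
exists (f r (delay_args g x r) - f r (delay_args g y r)).
  by rewrite diffqB; apply: cvgB; apply: solution_diffq_right.
have xD := solution_delay_args_in_D solx t0_r r_b.
have yD := solution_delay_args_in_D soly t0_r r_b.
apply: le_trans (f_lipschitz _ _ _ t0_r r_b xD yD) _.
apply: le_trans (ler_wpM2r (maxnorm_ge0 _ _) kK) _; apply: ler_wpM2l => //.
apply: maxnorm_le => // j; rewrite linearB /= !rowK.
exact/le_M/g_delay.
Qed.

Hypothesis gamma_t0 : gamma <= t0.

Lemma solutions_continuous {a b : R} : gamma <= a -> (b%:E < beta1)%E ->
  {within `[a, b], continuous (x \- y)}.
Proof.
case: solx => xc _ _ _ _; case: soly => yc _ _ _ _ g_a b_b.
have xyc : {within [set t | gamma <= t /\ (t%:E < beta1)%E], continuous (x \- y)}.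
  by move=> v; apply: continuousB; [exact: xc | exact: yc].
apply: continuous_subspaceW xyc => v /=; rewrite in_itv /= => /andP[a_v v_b].
by split; [exact: le_trans a_v | apply: le_lt_trans b_b; rewrite lee_fin].
Qed.

Lemma solutions_norm_continuous {a b : R} : gamma <= a -> (b%:E < beta1)%E ->
  {within `[a, b], continuous (fun v => N (x v - y v))}.
Proof.
move=> g_a b_b; apply: (within_continuous_comp _ (x \- y) N).
  by move=> z _; apply: is_norm_continuous.
exact: solutions_continuous.
Qed.

Lemma solutions_eq_short_itv s u K : t0 <= s < u -> (u%:E < beta1)%E -> 0 <= K ->
  (forall r, t0 <= r <= u -> k r <= K) -> K * (u - s) <= 2^-1 ->
  (forall v, gamma <= v <= s -> x v = y v) -> x u = y u.
Proof.
move=> /andP[t0_s s_u] u_b K0 kK K_half eq_s.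
have g_s : gamma <= s by apply: le_trans t0_s.
have [c c_in max_c] := EVT_max (ltW s_u) (solutions_norm_continuous g_s u_b).
move: c_in; rewrite in_itv /= => /andP[s_c c_u].
set M := N (x c - y c).
have M0 : 0 <= M := is_norm_ge0 normN _.
have le_M v : gamma <= v <= u -> N (x v - y v) <= M.
  move=> /andP[g_v v_u]; have [v_s|s_v] := leP v s.
    by rewrite eq_s ?g_v // subrr is_norm0.
  by apply: max_c; rewrite in_itv /= ltW.
have M_le : M <= K * M * (c - s).
  have c_b : (c%:E < beta1)%E by apply: le_lt_trans u_b; rewrite lee_fin.
  have := is_norm_mean_value_le normN (C := K * M) s_c (solutions_continuous g_s c_b).
  rewrite /= (eq_s s) ?g_s ?lexx // subrr subr0; apply=> r /andP[s_r r_c].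
  have t0_r : t0 <= r by apply: le_trans s_r.
  apply: solutions_diffq_bound => //.
  - by apply: le_lt_trans c_b; rewrite lee_fin ltW.
  - by apply: kK; rewrite t0_r; lra.
  - by move=> v /andP[g_v v_r]; apply: le_M; rewrite g_v; lra.
have M_le0 : M <= 0.
  have : K * (c - s) <= 2^-1 by apply: le_trans K_half; rewrite ler_wpM2l //; lra.
  by move/(ler_wpM2l M0); rewrite mulrA [M * K]mulrC; lra.
apply: (is_norm_subr_le0 normN); apply: le_trans M_le0; apply: le_M.
by rewrite lexx (le_trans g_s (ltW s_u)).
Qed.

Lemma solutions_eq_step s T K : t0 <= s < T -> (T%:E < beta1)%E -> 0 < K ->
  (forall r, t0 <= r <= T -> k r <= K) ->
  (forall u, gamma <= u <= s -> x u = y u) ->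
  exists2 d, 0 < d & forall u, s < u < s + d -> x u = y u.
Proof.
move=> /andP[t0_s s_T] T_b K0 kK eq_s.
have K20 : 0 < (2 * K)^-1 by rewrite invr_gt0; lra.
exists (Num.min (2 * K)^-1 (T - s)); first by rewrite lt_min K20 subr_gt0.
move=> u /andP[s_u]; rewrite -ltrBlDl lt_min => /andP[u_K u_T].
apply: (solutions_eq_short_itv s u K) => //.
- by rewrite t0_s s_u.
- by apply: le_lt_trans T_b; rewrite lee_fin; lra.
- exact: ltW.
- by move=> r /andP[t0_r r_u]; apply: kK; rewrite t0_r; lra.
- have -> : 2^-1 = K * (2 * K)^-1 by rewrite invfM mulrCA mulfV ?gt_eqF ?mulr1.
  by rewrite ler_wpM2l ?ltW //; lra.
Qed.

Hypothesis k_cont : {within [set t | t0 <= t /\ (t%:E < beta1)%E], continuous k}.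

Lemma lipschitz_rate_ub {t : R} : t0 <= t -> (t%:E < beta1)%E ->
  exists2 K, 0 < K & forall r, t0 <= r <= t -> k r <= K.
Proof.
move=> t0_t t_b.
have kc : {within `[t0, t], continuous k}.
  apply: continuous_subspaceW k_cont => r /=; rewrite in_itv /= => /andP[t0_r r_t].
  by split=> //; apply: le_lt_trans t_b; rewrite lee_fin.
have [c _ max_c] := EVT_max t0_t kc.
exists (Num.max 1 (k c)) => [|r r_in]; first by rewrite lt_max ltr01.
by rewrite le_max (max_c r) ?orbT // in_itv.
Qed.

Lemma solutions_eq t : gamma <= t -> (t%:E < beta1)%E -> x t = y t.
Proof.
have eq_init u : gamma <= u <= t0 -> x u = y u.
  by case: solx => _ _ _ _ xth; case: soly => _ _ _ _ yth u_in; rewrite xth // yth.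
move=> g_t t_b; have [t_t0|t0_t] := leP t t0; first by apply: eq_init; rewrite g_t.
have [K K0 kK] := lipschitz_rate_ub (ltW t0_t) t_b.
apply: (real_induction t0 t (fun u => x u = y u)) => [|s s_in eq_s|s /andP[t0_s s_t] eq_below|].
- by apply: eq_init; rewrite gamma_t0 lexx.
- apply: solutions_eq_step s_in t_b K0 kK _ => u /andP[g_u u_s].
  have [u_t0|t0_u] := leP u t0; first by apply: eq_init; rewrite g_u.
  by apply: eq_s; rewrite ltW.
- apply: (is_norm_subr_le0 normN).
  apply: (continuous_within_le_left (phi := fun v => N (x v - y v)) t0_s).
    by apply: solutions_norm_continuous => //; apply: le_lt_trans t_b; rewrite lee_fin.
  by move=> u u_in; rewrite eq_below // subrr is_norm0.
- by rewrite (ltW t0_t) lexx.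
Qed.

End DelayUniqueness.

Theorem mainTheorem1 (R : realType) (n m : nat) (N : 'rV[R]_n -> R)
  (t0 : R) (beta : \bar R) (D : set 'rV[R]_n)
  (f : R -> 'M[R]_(m, n) -> 'rV[R]_n) (k : R -> R)
  (g : 'I_m -> R -> R) (gamma : R) (theta : R -> 'rV[R]_n) (beta1 : \bar R) :
  is_norm N ->
  (0 < m)%N ->
  (t0%:E < beta)%E ->
  open D ->
  {within [set p : R * 'M[R]_(m, n) |
            (t0 <= p.1 /\ (p.1%:E < beta)%E) /\ forall j, D (row j p.2)],
    continuous (fun p => f p.1 p.2)} ->
  {within [set t | t0 <= t /\ (t%:E < beta)%E], continuous k} ->
  (forall t (z z' : 'M[R]_(m, n)), t0 <= t -> (t%:E < beta)%E ->
     (forall j, D (row j z)) -> (forall j, D (row j z')) ->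
     N (f t z - f t z') <= k t * maxnorm N (z - z')) ->
  (forall j, {within [set t | t0 <= t /\ (t%:E < beta)%E], continuous (g j)}) ->
  gamma <= t0 ->
  (forall j t, t0 <= t -> (t%:E < beta)%E -> gamma <= g j t <= t) ->
  {within `[gamma, t0], continuous theta} ->
  (forall t, gamma <= t <= t0 -> D (theta t)) ->
  (t0%:E < beta1)%E -> (beta1 <= beta)%E ->
  forall x y : R -> 'rV[R]_n,
    is_solution D f g theta gamma t0 beta1 x ->
    is_solution D f g theta gamma t0 beta1 y ->
    forall t, gamma <= t -> (t%:E < beta1)%E -> x t = y t.
Proof.
move=> normN _ _ _ _ k_cont f_lip _ gamma_t0 g_delay _ _ _ beta1_beta x y solx soly.
have below_beta t : (t%:E < beta1)%E -> (t%:E < beta)%E.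
  by move=> t_b; apply: lt_le_trans beta1_beta.
apply: (solutions_eq _ normN _ solx soly gamma_t0).
- by move=> j t t0_t /below_beta; apply: g_delay.
- by move=> t z z' t0_t /below_beta; apply: f_lip.
- by apply: continuous_subspaceW k_cont => t [t0_t /below_beta].
Qed.
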